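(* Let $p\geq 5$ be a prime, $L/\mathbb{Q}_p$ a finite extension with ring of integers $\mathcal{O}_L$, $k\geq 2$ an even integer, $e_0\in L$, and $\Lambda_{(k,r_0)}:=\mathcal{O}_L\left[\left[\frac{X-k}{e_0}\right]\right]$. Let $B^\circ(r_0)_{\rm cl}$ be the (infinite) set of classical weights of the Coleman family described in the context, and for each $\kappa\in B^\circ(r_0)_{\rm cl}$ let $P_\kappa\in\Lambda_{(k,r_0)}$ be a generator of the kernel of the evaluation map $\pi_\kappa:\Lambda_{(k,r_0)}\to\mathcal{O}_L$, $X\mapsto\kappa$, and put $(P_\kappa):=\Lambda_{(k,r_0)}[1/p]\cdot P_\kappa$. Let $h=v(\lambda)\geq 0$. Then $$\bigcap_{\kappa\in B^\circ(r_0)_{\rm cl}}\,(P_\kappa)\,\widehat{\otimes}_{\mathbb{Q}_p}\,\mathcal{H}_{v(\lambda)}(\widetilde{\Gamma}_{\rm ac})_L=0,$$ the intersection being taken inside $\Lambda_{(k,r_0)}[1/p]\,\widehat{\otimes}_{\mathbb{Q}_p}\,\mathcal{H}_{v(\lambda)}(\widetilde{\Gamma}_{\rm ac})_L$.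
   Context: Let $K$ be an imaginary quadratic field in which $p$ splits, $K_{p^\infty}$ its ring class field of conductor $p^\infty$ and $\widetilde{\Gamma}_{\rm ac}=\mathrm{Gal}(K_{p^\infty}/K)=\Gamma_{\rm ac}\times\Delta_{\rm ac}$ with $\Gamma_{\rm ac}\cong\mathbb{Z}_p$ and $\Delta_{\rm ac}$ finite; fix a topological generator $\gamma_{\rm ac}$ of $\Gamma_{\rm ac}$. For real $h\geq 0$ define on $\mathbb{Q}_p[[X]]$ the valuation $v_h(\sum_n c_nX^n)=\inf_n\{\mathrm{ord}_p(c_n)+h\ell(n)\}$ where $\ell(0)=0$ and $\ell(n)=\frac{\log n}{\log p}+1$ for $n\geq1$; let $\mathcal{H}_h=\{F: v_h(F)>-\infty\}$. Substituting $X=\gamma_{\rm ac}-1$ gives $\mathcal{H}_h(\Gamma_{\rm ac})$; set $\mathcal{H}_h(\widetilde{\Gamma}_{\rm ac}):=\mathcal{H}_h(\Gamma_{\rm ac})\otimes_{\Lambda(\Gamma_{\rm ac})}\mathbb{Z}_p[[\widetilde{\Gamma}_{\rm ac}]]$ and $\mathcal{H}_h(\widetilde{\Gamma}_{\rm ac})_L:=\mathcal{H}_h(\widetilde{\Gamma}_{\rm ac})\otimes_{\mathbb{Z}_p}L$. The ring $\Lambda_{(k,r_0)}$ is the ring of functions bounded by $1$ on an open disc in weight space about $k$ (with $r_0=p^{\mathrm{ord}_p(e_0)}<p^{(p-1)/(p-2)}$). A Coleman family $\mathbf{f}$ of constant slope $v(\lambda)$ is given over this disc, and $B^\circ(r_0)_{\rm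 cl}$ denotes its set of classical points: an infinite set of integers $\kappa$ with $|\kappa-k|_p<|e_0|_p$ at which $\mathbf{f}$ specializes to a classical eigenform of weight $\kappa$. *)

From HB Require Import structures.
From mathcomp Require Import all_boot all_order all_algebra.
From mathcomp Require Import all_classical all_reals all_analysis.
Set Implicit Arguments. Unset Strict Implicit. Unset Printing Implicit Defensive.
Import Order.TTheory GRing.Theory Num.Theory.
Local Open Scope ring_scope.

Section Defs.
Variables (R : realType) (L : fieldType) (ord : L -> \bar R).

(* ord is a discrete, complete, non-archimedean valuation on L, normalized by
   ord p = 1, with finite residue field: this characterizes the finite
   extensions L of Q_p together with their valuation ord_p. *)
Definition cauchy_ord (u : nat -> L) : Prop :=
  forall N : R, exists M : nat, forall i j : nat, (M <= i)%N -> (M <= j)%N ->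
    (N%:E <= ord (u i - u j))%E.

Definition cvg_ord (u : nat -> L) (l : L) : Prop :=
  forall N : R, exists M : nat, forall i : nat, (M <= i)%N ->
    (N%:E <= ord (u i - l))%E.

Definition finite_ext_Qp (p : nat) : Prop :=
  [/\ (forall x : L, ord x = +oo%E <-> x = 0),
      (forall x y : L, ord (x * y) = (ord x + ord y)%E),
      (forall x y : L, (Order.min (ord x) (ord y) <= ord (x + y))%E) &
      ord (p%:R) = 1%:E] /\ [/\
      (exists e : nat, (0 < e)%N /\ forall x : L, x != 0 ->
          exists z : int, ord x = (z%:~R / e%:R)%:E),
      (forall u : nat -> L, cauchy_ord u -> exists l : L, cvg_ord u l) &
      (exists s : seq L, (forall r, r \in s -> (0 <= ord r)%E) /\
          forall x : L, (0 <= ord x)%E -> exists2 r, r \in s & (0 < ord (x - r))%E)].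

(* Power series in Y := (X - k)/e0 are coefficient sequences nat -> L. *)
Definition in_Lambda (a : nat -> L) : Prop := forall m, (0 <= ord (a m))%E.

Definition mul_ser (a b : nat -> L) : nat -> L :=
  fun m => \sum_(i < m.+1) a i * b (m - i)%N.

Definition evals_to (a : nat -> L) (y s : L) : Prop :=
  cvg_ord (fun N => \sum_(m < N) a m * y ^+ m) s.

(* the specialization pi_kappa : Lambda -> O_L, X |-> kappa, i.e.
   Y |-> (kappa - k)/e0 *)
Definition y_of (k : nat) (e0 : L) (kappa : int) : L :=
  (kappa - k%:Z)%:~R / e0.

Definition gen_ker_pi (k : nat) (e0 : L) (kappa : int) (P : nat -> L) : Prop :=
  in_Lambda P /\
  forall a, in_Lambda a ->
    (evals_to a (y_of k e0 kappa) 0 <-> exists2 b, in_Lambda b & a = mul_ser P b).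

Definition ell (p n : nat) : R :=
  if n == 0%N then 0 else ln (n%:R) / ln (p%:R) + 1.

(* Elements of Lambda[1/p] \hat\otimes H_h(~Gamma_ac)_L, with
   ~Gamma_ac = Gamma_ac x Delta and X = gamma_ac - 1: families, indexed by
   delta in Delta, of two-variable series sum_{m,n} c(delta,m,n) Y^m X^n
   with inf (ord c(delta,m,n) + h * l(n)) > -oo. *)
Definition tens_elt (D : finType) := D -> nat -> nat -> L.

Definition in_tens (D : finType) (p : nat) (h : R) (F : tens_elt D) : Prop :=
  exists C : R, forall (d : D) (m n : nat),
    (C%:E <= ord (F d m n) + (h * ell p n)%:E)%E.

Definition mulY (D : finType) (P : nat -> L) (G : tens_elt D) : tens_elt D :=
  fun d m n => \sum_(i < m.+1) P i * G d (m - i)%N n.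

End Defs.

From HB Require Import structures.
From mathcomp Require Import all_boot all_order all_algebra.
From mathcomp Require Import all_classical all_reals all_analysis.
From mathcomp Require Import lra zify.
Import Order.TTheory GRing.Theory Num.Theory.
Set Implicit Arguments.
Unset Strict Implicit.
Unset Printing Implicit Defensive.
Local Open Scope ring_scope.

(* Fix a coordinate (delta, n) of F.  After scaling by a power of p, its series
   a(Y) in Y = (X - k)/e0 lies in Lambda = O_L[[Y]], and it vanishes at every
   y_kappa = (kappa - k)/e0, kappa in B, being divisible by the generator P_kappa
   of the kernel of evaluation at y_kappa.  Such a generator has Weierstrass
   degree 1: its constant term lies in the maximal ideal, and Y - y_kappa is a
   multiple of it.  Hence a = P_kappa b with the Weierstrass degree of b one less
   than that of a, and b still vanishes at the other y_kappa', where P_kappa has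
   the finite valuation ord (y_kappa' - y_kappa).  Since B is infinite, a nonzero
   a would have arbitrarily large Weierstrass degree, so a = 0. *)

Lemma exists_nat_gt (R : archiRealDomainType) (x : R) : exists n : nat, x < n%:R.
Proof.
exists (Num.Def.archi_bound `|x|).
exact: le_lt_trans (ler_norm x) (archi_boundP (normr_ge0 x)).
Qed.

Lemma natmulr_ge_eventually (R : archiRealFieldType) (A c : R) :
  0 < c -> exists n : nat, forall i, (n <= i)%N -> A <= c *+ i.
Proof.
move=> c_gt0; have [n ltn] := exists_nat_gt (A / c); exists n => i le_ni.
apply: le_trans (ler_wpMn2l (ltW c_gt0) le_ni).
by rewrite -[c *+ n]mulr_natr -ler_pdivrMl // mulrC ltW.
Qed.

Lemma sum_antidiagonal (V : nmodType) (T : nat -> nat -> V) (N : nat) :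
  \sum_(m < N) \sum_(i < m.+1) T i (m - i)%N = \sum_(i < N) \sum_(j < N - i) T i j.
Proof.
elim: N => [|N IH]; first by rewrite !big_ord0.
rewrite big_ord_recr /= IH.
transitivity (\sum_(i < N.+1) (\sum_(j < N - i) T i j + T i (N - i)%N)).
  by rewrite big_split /= [X in _ = X + _]big_ord_recr /= subnn big_ord0 addr0.
apply: eq_bigr => i _; rewrite subSn; last by rewrite -ltnS.
by rewrite big_ord_recr.
Qed.

Lemma mul_ser_delta (L : fieldType) (a : nat -> L) :
  mul_ser a (fun m => (m == 0%N)%:R) = a.
Proof.
apply/funext => m; rewrite /mul_ser big_ord_recr /= subnn eqxx mulr1 big1 ?add0r //.
by move=> i _; rewrite subn_eq0 leqNgt ltn_ord mulr0.
Qed.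

Section Valuation.
Variables (R : realType) (L : fieldType) (ord : L -> \bar R).
Hypothesis ord_eq_infty : forall x, ord x = +oo%E <-> x = 0.
Hypothesis ordM : forall x y, ord (x * y) = (ord x + ord y)%E.
Hypothesis ord_add_min : forall x y, (Order.min (ord x) (ord y) <= ord (x + y))%E.

Lemma ord0 : ord 0 = +oo%E. Proof. exact/ord_eq_infty. Qed.

Lemma ord_fin x : x != 0 -> exists r : R, ord x = r%:E.
Proof.
move=> x_neq0; case ox: (ord x) => [r| |]; first by exists r.
- by move/ord_eq_infty: ox => /eqP; rewrite (negbTE x_neq0).
- by have := ordM x 0; rewrite mulr0 ord0 ox.
Qed.

Lemma ord_gt0_lb x : (0 < ord x)%E -> exists2 c : R, 0 < c & (c%:E <= ord x)%E.
Proof.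
case: (ord x) => [r| |] //= r_gt0; first by exists r.
by exists 1; rewrite ?leey.
Qed.

Lemma ord1 : ord 1 = 0%:E.
Proof.
have [r ord1r] := ord_fin (oner_neq0 L).
have := ordM 1 1; rewrite mulr1 ord1r -EFinD => -[r_eq].
by rewrite (_ : r = 0) //; lra.
Qed.

Lemma ordN x : ord (- x) = ord x.
Proof.
have ordN1 : ord (-1) = 0%:E.
  have [r ordN1r] : exists r : R, ord (-1) = r%:E.
    by apply: ord_fin; rewrite oppr_eq0 oner_eq0.
  have := ordM (-1) (-1); rewrite mulrNN mulr1 ord1 ordN1r -EFinD => -[r_eq].
  by rewrite (_ : r = 0) //; lra.
by rewrite -mulN1r ordM ordN1 add0e.
Qed.

Lemma ord_add_ge (c : \bar R) x y :
  (c <= ord x)%E -> (c <= ord y)%E -> (c <= ord (x + y))%E.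
Proof. by move=> cx cy; apply: le_trans (ord_add_min x y); rewrite le_min cx cy. Qed.

Lemma ord_add_gt (c : \bar R) x y :
  (c < ord x)%E -> (c < ord y)%E -> (c < ord (x + y))%E.
Proof. by move=> cx cy; apply: lt_le_trans (ord_add_min x y); rewrite lt_min cx cy. Qed.

Lemma ord_sum_ge (I : Type) (r : seq I) (P : pred I) (F : I -> L) (c : \bar R) :
  (forall i, P i -> (c <= ord (F i))%E) -> (c <= ord (\sum_(i <- r | P i) F i))%E.
Proof.
move=> cF; apply: (big_ind (fun x => c <= ord x)%E) => //.
- by rewrite ord0 leey.
- exact: ord_add_ge.
Qed.

Lemma ord_sum_gt (I : Type) (r : seq I) (P : pred I) (F : I -> L) (c : R) :
  (forall i, P i -> (c%:E < ord (F i))%E) -> (c%:E < ord (\sum_(i <- r | P i) F i))%E.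
Proof.
move=> cF; apply: (big_ind (fun x => c%:E < ord x)%E) => //.
- by rewrite ord0 ltry.
- exact: ord_add_gt.
Qed.

Lemma ord_add_eq_of_lt x y : (ord x < ord y)%E -> ord (x + y) = ord x.
Proof.
move=> lt_xy; apply/eqP; rewrite eq_le; apply/andP; split; last first.
  by apply: le_trans (ord_add_min x y); rewrite le_min lexx ltW.
have := ord_add_min (x + y) (- y); rewrite addrK ordN.
by rewrite ge_min !leNgt lt_xy orbF.
Qed.

Lemma ord_mul_ge (a b : R) x y :
  (a%:E <= ord x)%E -> (b%:E <= ord y)%E -> ((a + b)%:E <= ord (x * y))%E.
Proof. by move=> le_ax le_by; rewrite ordM EFinD leeD. Qed.

Lemma ord_mul_gtl (a b : R) x y :
  (a%:E < ord x)%E -> (b%:E <= ord y)%E -> ((a + b)%:E < ord (x * y))%E.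
Proof. by move=> lt_ax le_by; rewrite ordM EFinD lte_leD. Qed.

Lemma ord_mul_gtr (a b : R) x y :
  (a%:E <= ord x)%E -> (b%:E < ord y)%E -> ((a + b)%:E < ord (x * y))%E.
Proof. by move=> le_ax lt_by; rewrite mulrC addrC ord_mul_gtl. Qed.

Lemma ordX_ge (c : R) x n : (c%:E <= ord x)%E -> ((c *+ n)%:E <= ord (x ^+ n))%E.
Proof.
move=> cx; elim: n => [|n IH]; first by rewrite expr0 ord1.
by rewrite exprS mulrS ord_mul_ge.
Qed.

Lemma ord_nat_ge0 n : (0 <= ord n%:R)%E.
Proof.
elim: n => [|n IH]; first by rewrite ord0 leey.
by rewrite -natr1 ord_add_ge // ord1.
Qed.

Definition psum (a : nat -> L) (y : L) (N : nat) : L := \sum_(m < N) a m * y ^+ m.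

Lemma evals_to0P a y : evals_to ord a y 0 <->
  forall M : R, exists N0, forall N, (N0 <= N)%N -> (M%:E <= ord (psum a y N))%E.
Proof.
split=> vanish M; have [N0 N0P] := vanish M; exists N0 => N le_N0N;
  by have := N0P N le_N0N; rewrite /psum subr0.
Qed.

Lemma psum_scale u a y N : psum (fun m => u * a m) y N = u * psum a y N.
Proof. by rewrite /psum mulr_sumr; apply: eq_bigr => m _; rewrite mulrA. Qed.

Lemma evals_to_scale u a y :
  evals_to ord a y 0 -> evals_to ord (fun m => u * a m) y 0.
Proof.
move=> /evals_to0P a_vanish; apply/evals_to0P => M.
have [->|u_neq0] := eqVneq u 0.
  by exists 0%N => N _; rewrite psum_scale mul0r ord0 leey.
have [r ord_u] := ord_fin u_neq0; have [N0 N0P] := a_vanish (M - r).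
exists N0 => N /N0P; rewrite psum_scale ordM ord_u.
by case: (ord (psum a y N)) => [t| |] //=; rewrite ?leey // -EFinD !lee_fin => ?; lra.
Qed.

Lemma ord_psum_mul_ser_sub a b y (c : R) N :
  in_Lambda ord a -> in_Lambda ord b -> (c%:E <= ord y)%E -> 0 <= c ->
  ((c *+ N)%:E <= ord (psum (mul_ser a b) y N - psum a y N * psum b y N))%E.
Proof.
move=> aL bL cy c_ge0.
pose T i j := a i * b j * y ^+ (i + j).
have psum_ab : psum (mul_ser a b) y N = \sum_(i < N) \sum_(j < N - i) T i j.
  rewrite -sum_antidiagonal /psum /mul_ser; apply: eq_bigr => m _; rewrite mulr_suml.
  by apply: eq_bigr => i _; rewrite /T subnKC // -ltnS.
have psum_a_b : psum a y N * psum b y N = \sum_(i < N) \sum_(j < N) T i j.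
  rewrite /psum mulr_suml; apply: eq_bigr => i _; rewrite mulr_sumr.
  by apply: eq_bigr => j _; rewrite /T exprD mulrACA.
have split_j (i : 'I_N) :
    \sum_(j < N) T i j = \sum_(j < N - i) T i j + \sum_(N - i <= j < N) T i j.
  by rewrite -!(big_mkord xpredT (T i)) (@big_cat_nat _ _ _ (N - i)) // leq_subr.
rewrite psum_ab psum_a_b (eq_bigr _ (fun i _ => split_j i)) big_split /=.
rewrite opprD addrA subrr add0r ordN.
apply: ord_sum_ge => i _; rewrite big_nat_cond.
apply: ord_sum_ge => j /andP[/andP[le_j _] _].
apply: le_trans (_ : ((0 + 0 + c *+ (i + j))%:E <= _)%E).
  by rewrite !add0r lee_fin; apply: ler_wpMn2l => //; have := ltn_ord i; lia.
by apply: ord_mul_ge; [apply: ord_mul_ge; [exact: aL|exact: bL]|exact: ordX_ge].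
Qed.

(* Cancelling [P] from [P * b] at [y] only needs the partial sums of [P] at [y]
   to have bounded valuation, since [psum (P * b) - psum P * psum b] tends to 0. *)
Lemma evals_to_mul_ser_cancel P b y (w : R) :
  in_Lambda ord P -> in_Lambda ord b -> (0 < ord y)%E ->
  (exists N0, forall N, (N0 <= N)%N -> (ord (psum P y N) <= w%:E)%E) ->
  evals_to ord (mul_ser P b) y 0 -> evals_to ord b y 0.
Proof.
move=> PL bL /ord_gt0_lb[c c_gt0 cy] [N0 PN_le] /evals_to0P Pb_vanish.
apply/evals_to0P => M.
have [N1 N1P] := Pb_vanish (M + w).
have [N2 N2P] := natmulr_ge_eventually (M + w) c_gt0.
exists (maxn (maxn N1 N2) N0) => N; rewrite !geq_max => /andP[/andP[le1 le2] le0].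
have prod_ge : ((M + w)%:E <= ord (psum P y N * psum b y N))%E.
  rewrite -[psum P y N * _](subKr (psum (mul_ser P b) y N)).
  apply: ord_add_ge; first exact: N1P.
  rewrite ordN; apply: le_trans (ord_psum_mul_ser_sub N PL bL cy (ltW c_gt0)).
  by rewrite lee_fin N2P.
move: prod_ge; rewrite ordM; have := PN_le N le0.
case: (ord (psum P y N)) => [r| |] //; case: (ord (psum b y N)) => [t| |] //.
- by rewrite -EFinD !lee_fin => ? ?; lra.
- by move=> _ _; exact: leey.
Qed.

(* [N] is the Weierstrass degree and [v] the Gauss valuation of [a]. *)
Definition is_wdeg (a : nat -> L) (N : nat) (v : R) :=
  [/\ forall m, (v%:E <= ord (a m))%E, ord (a N) = v%:E &
      forall m, (m < N)%N -> (v%:E < ord (a m))%E].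

Lemma is_wdeg_neq0 a N v : is_wdeg a N v -> a N != 0.
Proof. by case=> _ ord_aN _; apply/eqP => aN0; move: ord_aN; rewrite aN0 ord0. Qed.

Lemma is_wdeg_uniq a N N' v v' : is_wdeg a N v -> is_wdeg a N' v' -> N = N'.
Proof.
move=> [a_ge aN a_gt] [a_ge' aN' a_gt'].
have vv' : v = v'.
  apply/eqP; rewrite eq_le -!lee_fin; apply/andP; split.
  - by rewrite -aN'; exact: a_ge.
  - by rewrite -aN; exact: a_ge'.
subst v'.
case: (ltngtP N N') => // lt_NN'.
- by have := a_gt' _ lt_NN'; rewrite aN ltxx.
- by have := a_gt _ lt_NN'; rewrite aN' ltxx.
Qed.

Lemma is_wdeg_mul a b Na Nb va vb : is_wdeg a Na va -> is_wdeg b Nb vb ->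
  is_wdeg (mul_ser a b) (Na + Nb) (va + vb).
Proof.
move=> [a_ge aN a_gt] [b_ge bN b_gt].
have term_gt m (i : 'I_m.+1) : (i < Na)%N || (m - i < Nb)%N ->
    ((va + vb)%:E < ord (a i * b (m - i)%N))%E.
  case/orP => [lt_iNa|lt_Nb]; first exact: ord_mul_gtl (a_gt _ lt_iNa) (b_ge _).
  exact: ord_mul_gtr (a_ge _) (b_gt _ lt_Nb).
split.
- by move=> m; apply: ord_sum_ge => i _; apply: ord_mul_ge.
- have lt_Na : (Na < (Na + Nb).+1)%N by rewrite ltnS leq_addr.
  rewrite /mul_ser (bigD1 (Ordinal lt_Na)) //= addKn.
  rewrite ord_add_eq_of_lt ordM aN bN //.
  rewrite -EFinD; apply: ord_sum_gt => i i_neq; apply: term_gt.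
  have i_neqNa : (i : nat) != Na.
    by move: i_neq; apply: contra => /eqP iNa; apply/eqP/val_inj.
  by have := ltn_ord i; lia.
- move=> m lt_m; apply: ord_sum_gt => i _; apply: term_gt.
  by have := ltn_ord i; lia.
Qed.

(* [gen_ker_pi ord k e0 kappa P] is [ker_gen (y_of k e0 kappa) P] by definition. *)
Definition ker_gen (y : L) (P : nat -> L) :=
  in_Lambda ord P /\ forall a, in_Lambda ord a ->
    (evals_to ord a y 0 <-> exists2 b, in_Lambda ord b & a = mul_ser P b).

Lemma ker_gen_evals y P : ker_gen y P -> evals_to ord P y 0.
Proof.
move=> [PL P_ker]; apply/(P_ker _ PL); exists (fun m => (m == 0%N)%:R).
  by move=> m; case: (m == 0%N) => /=; rewrite ?ord1 ?ord0 ?leey.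
by rewrite mul_ser_delta.
Qed.

Lemma evals_to0_ord_coef0_gt0 P y : in_Lambda ord P -> evals_to ord P y 0 ->
  (0 < ord y)%E -> (0 < ord (P 0%N))%E.
Proof.
move=> PL /evals_to0P P_vanish /ord_gt0_lb[c c_gt0 cy].
rewrite lt_neqAle PL andbT; apply/negP => /eqP ordP0.
have [N0 N0P] := P_vanish 1.
have := N0P N0.+1 (leqnSn N0); rewrite /psum big_ord_recl /= expr0 mulr1.
rewrite ord_add_eq_of_lt -?ordP0; first by rewrite lee_fin ler10.
apply: ord_sum_gt => j _; apply: lt_le_trans (ord_mul_ge (PL j.+1) (ordX_ge j.+1 cy)).
by rewrite add0r lte_fin pmulrn_lgt0.
Qed.

Definition ser_XsubC (y : L) : nat -> L :=
  fun m => if m == 0%N then - y else (m == 1%N)%:R.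

Lemma ser_XsubC_Lambda y : (0 <= ord y)%E -> in_Lambda ord (ser_XsubC y).
Proof. by move=> y_ge0 [|[|m]]; rewrite /ser_XsubC /= ?ordN ?ord1 ?ord0 ?leey. Qed.

Lemma ser_XsubC_evals y : evals_to ord (ser_XsubC y) y 0.
Proof.
apply/evals_to0P => M; exists 2%N => -[|[|N]] // _.
rewrite /psum !big_ord_recl big1 => [|i _]; last by rewrite /ser_XsubC /= mul0r.
by rewrite /ser_XsubC /= expr0 expr1 mulr1 mul1r addr0 addNr ord0 leey.
Qed.

(* Comparing the coefficients of [Y] in [Y - y = P * c] shows that [P 1] is a unit. *)
Lemma ker_gen_is_wdeg1 y P : (0 < ord y)%E -> ker_gen y P -> is_wdeg P 1 0.
Proof.
move=> y_gt0 [PL P_ker].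
have P0_gt0 := evals_to0_ord_coef0_gt0 PL (ker_gen_evals (conj PL P_ker)) y_gt0.
have [c cL XsubC_eq] := (P_ker _ (ser_XsubC_Lambda (ltW y_gt0))).1 (ser_XsubC_evals y).
have ord_P1 : ord (P 1%N) = 0%:E.
  have := congr1 (fun f => f 1%N) XsubC_eq.
  rewrite /ser_XsubC /mul_ser /= big_ord_recr /= big_ord1 /= mulr1n => one_eq.
  apply/eqP; rewrite eq_le PL andbT leNgt; apply/negP => P1_gt0.
  have : (0 < ord (1 : L))%E.
    rewrite one_eq; apply: ord_add_gt; rewrite ordM.
    - by apply: lt_le_trans P0_gt0 _; rewrite leeDl //; exact: cL.
    - by apply: lt_le_trans P1_gt0 _; rewrite leeDl //; exact: cL.
  by rewrite ord1 ltxx.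
by split=> // m; rewrite ltnS leqn0 => /eqP ->.
Qed.

(* [P(y') - P(y) = (y' - y) * \sum_m P m * h m] with [h m = (y'^m - y^m)/(y' - y)],
   and the only unit term of this sum is [P 1 * h 1 = P 1]. *)
Lemma is_wdeg1_ord_psum P y y' :
  is_wdeg P 1 0 -> evals_to ord P y 0 -> (0 < ord y)%E -> (0 < ord y')%E -> y' != y ->
  exists N0, forall N, (N0 <= N)%N -> ord (psum P y' N) = ord (y' - y).
Proof.
move=> [PL P1 _] /evals_to0P P_vanish /ord_gt0_lb[c1 c1_gt0 c1y]
  /ord_gt0_lb[c2 c2_gt0 c2y'] y'_neq_y.
pose c := Num.min c1 c2.
have c_gt0 : 0 < c by rewrite lt_min c1_gt0.
have cy : (c%:E <= ord y)%E by apply: le_trans c1y; rewrite lee_fin ge_min lexx.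
have cy' : (c%:E <= ord y')%E by apply: le_trans c2y'; rewrite lee_fin ge_min lexx orbT.
pose h m := \sum_(i < m) y' ^+ (m.-1 - i) * y ^+ i.
have psum_sub N : psum P y' N - psum P y N = (y' - y) * \sum_(m < N) P m * h m.
  rewrite /psum -sumrB mulr_sumr; apply: eq_bigr => m _.
  by rewrite -mulrBr subrXX mulrCA.
have ord_h_sum n : ord (\sum_(m < n.+2) P m * h m) = 0%:E.
  rewrite big_ord_recl big_ord_recl /= /h big_ord0 mulr0 add0r big_ord1 /=.
  rewrite subn0 !expr0 !mulr1 ord_add_eq_of_lt P1 //.
  apply: ord_sum_gt => j _.
  apply: lt_le_trans (ord_mul_ge (PL _) (_ : ((c *+ j.+1)%:E <= _)%E)).
    by rewrite add0r lte_fin pmulrn_lgt0.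
  apply: ord_sum_ge => i _.
  have -> : c *+ j.+1 = c *+ (j.+1 - i) + c *+ i by rewrite -mulrnDr subnK // -ltnS.
  by apply: ord_mul_ge; apply: ordX_ge.
have [w ord_w] : exists w : R, ord (y' - y) = w%:E by apply: ord_fin; rewrite subr_eq0.
have [N0 N0P] := P_vanish (w + 1).
exists (maxn N0 2) => N; rewrite geq_max => /andP[le0 le2].
have ord_diff : ord (psum P y' N - psum P y N) = ord (y' - y).
  by rewrite psum_sub ordM; case: N le0 le2 => [|[|n]] // _ _; rewrite ord_h_sum adde0.
rewrite -[psum P y' N](subrK (psum P y N)).
rewrite (ord_add_eq_of_lt (x := psum P y' N - psum P y N)) ord_diff //.
by rewrite ord_w; apply: lt_le_trans (N0P N le0); rewrite lte_fin ltrDl.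
Qed.

Lemma ker_gen_cancel y y' P b :
  ker_gen y P -> (0 < ord y)%E -> (0 < ord y')%E -> y' != y -> in_Lambda ord b ->
  evals_to ord (mul_ser P b) y' 0 -> evals_to ord b y' 0.
Proof.
move=> P_ker y_gt0 y'_gt0 y'_neq_y bL.
have [w ord_w] : exists w : R, ord (y' - y) = w%:E by apply: ord_fin; rewrite subr_eq0.
have [N0 N0P] := is_wdeg1_ord_psum (ker_gen_is_wdeg1 y_gt0 P_ker) (ker_gen_evals P_ker)
  y_gt0 y'_gt0 y'_neq_y.
apply: evals_to_mul_ser_cancel P_ker.1 bL y'_gt0 _.
by exists N0 => N /N0P ->; rewrite ord_w.
Qed.

Section Discrete.
Variable e : nat.
Hypothesis e_gt0 : (0 < e)%N.
Hypothesis ord_discrete : forall x, x != 0 -> exists z : int, ord x = (z%:~R / e%:R)%:E.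

Lemma is_wdeg_exists a :
  in_Lambda ord a -> (exists m, a m != 0) -> exists N v, is_wdeg a N v.
Proof.
move=> aL [m0 am0_neq0].
have e_pos : (0 : R) < e%:R by rewrite ltr0n.
have ord_nat m : a m != 0 -> exists k : nat, ord (a m) = (k%:R / e%:R)%:E.
  move=> am_neq0; have [[k|k] ord_z] := ord_discrete am_neq0; first by exists k.
  by have := aL m; rewrite ord_z lee_fin pmulr_lge0 ?invr_gt0 // ler0z.
pose Q k := `[< exists2 m, a m != 0 & ord (a m) = (k%:R / e%:R)%:E >].
have exQ : exists k, Q k.
  by have [k ord_k] := ord_nat m0 am0_neq0; exists k; apply/asboolP; exists m0.
case: (ex_minnP exQ) => kmin /asboolP[m1 _ ord_m1] kmin_min.
pose v : R := kmin%:R / e%:R.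
have v_le m : (v%:E <= ord (a m))%E.
  have [->|am_neq0] := eqVneq (a m) 0; first by rewrite ord0 leey.
  have [k ord_k] := ord_nat m am_neq0.
  rewrite ord_k lee_fin ler_pM2r ?invr_gt0 // ler_nat.
  by apply: kmin_min; apply/asboolP; exists m.
have exN : exists N, `[< ord (a N) = v%:E >] by exists m1; apply/asboolP.
case: (ex_minnP exN) => N /asboolP ord_N N_min.
exists N, v; split => // m lt_mN.
rewrite lt_neqAle v_le andbT; apply/eqP => ord_m.
by have := N_min m (asboolT (esym ord_m)); rewrite leqNgt lt_mN.
Qed.

Variables (I : Type) (B : set I) (Y : I -> L) (P : I -> nat -> L).
Hypothesis Y_gt0 : forall i, B i -> (0 < ord (Y i))%E.
Hypothesis Y_inj : forall i j, B i -> B j -> Y i = Y j -> i = j.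
Hypothesis P_ker : forall i, B i -> ker_gen (Y i) (P i).

Lemma is_wdeg_vanish_divide a N v (A : set I) i :
  (A `<=` B)%classic -> A i -> in_Lambda ord a -> is_wdeg a N v ->
  (forall j, A j -> evals_to ord a (Y j) 0) ->
  exists b Nb vb, [/\ in_Lambda ord b, is_wdeg b Nb vb, N = Nb.+1 &
    forall j, (A `\ i)%classic j -> evals_to ord b (Y j) 0].
Proof.
move=> AB Ai aL a_wdeg a_vanish; have Bi := AB i Ai.
have [b bL a_eq] := ((P_ker Bi).2 a aL).1 (a_vanish i Ai).
have b_nz : exists m, b m != 0.
  apply: contrapT => b0; move: (is_wdeg_neq0 a_wdeg).
  rewrite a_eq /mul_ser big1 ?eqxx // => j _.
  have [->|bj_neq0] := eqVneq (b (N - j)%N) 0; first by rewrite mulr0.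
  by case: b0; exists (N - j)%N.
have [Nb [vb b_wdeg]] := is_wdeg_exists bL b_nz.
exists b, Nb, vb; split => //.
  rewrite -add1n; apply: is_wdeg_uniq a_wdeg _; rewrite a_eq.
  exact: is_wdeg_mul (ker_gen_is_wdeg1 (Y_gt0 Bi) (P_ker Bi)) b_wdeg.
move=> j [Aj j_neq_i]; have Bj := AB j Aj.
apply: ker_gen_cancel (P_ker Bi) (Y_gt0 Bi) (Y_gt0 Bj) _ bL _.
  by apply/eqP => Yji; apply: j_neq_i; exact: Y_inj Bj Bi Yji.
by rewrite -a_eq; apply: a_vanish.
Qed.

(* Each zero in [B] splits off a factor [P i], lowering the Weierstrass degree. *)
Lemma is_wdeg_zeros_finite a N v (A : set I) :
  (A `<=` B)%classic -> in_Lambda ord a -> is_wdeg a N v ->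
  (forall j, A j -> evals_to ord a (Y j) 0) -> finite_set A.
Proof.
elim: N a v A => [|N IH] a v A AB aL a_wdeg a_vanish; apply: contrapT => A_inf;
  have [i Ai] := infinite_setN0 A_inf;
  have [b [Nb [vb [bL b_wdeg N_eq b_vanish]]]] :=
    is_wdeg_vanish_divide AB Ai aL a_wdeg a_vanish => //.
case: N_eq => Nb_eq; subst Nb.
apply: infinite_setD A_inf (finite_set1 i) _.
by apply: IH b_wdeg b_vanish => // j [Aj _]; exact: AB.
Qed.

Lemma Lambda_vanish_eq0 a : in_Lambda ord a -> infinite_set B ->
  (forall i, B i -> evals_to ord a (Y i) 0) -> forall m, a m = 0.
Proof.
move=> aL B_inf a_vanish m; apply: contrapT => /eqP am_neq0.
have [N [v a_wdeg]] := is_wdeg_exists aL (ex_intro _ m am_neq0).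
exact: B_inf (is_wdeg_zeros_finite (@subset_refl _ B) aL a_wdeg a_vanish).
Qed.

End Discrete.

Lemma y_of_gt0 k e0 (kappa : int) : e0 != 0 ->
  (ord e0 < ord (kappa - k%:Z)%:~R)%E -> (0 < ord (y_of k e0 kappa))%E.
Proof.
move=> e0_neq0; have [r ord_e0] := ord_fin e0_neq0.
have ord_inv : ord e0^-1 = (- r)%:E.
  have := ordM e0 e0^-1; rewrite mulfV // ord1 ord_e0.
  by case: (ord e0^-1) => [s| |] //=; rewrite -EFinD => -[s_eq]; congr EFin; lra.
rewrite /y_of ordM ord_inv ord_e0.
by case: (ord _) => [t| |] //=; rewrite ?ltry // -EFinD !lte_fin => ?; lra.
Qed.

Lemma in_tens_coef_lb (D : finType) p h (F : tens_elt L D) d n :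
  in_tens ord p h F -> exists C : R, forall m, (C%:E <= ord (F d m n))%E.
Proof.
move=> [C F_lb]; exists (C - h * ell R p n) => m.
have := F_lb d m n.
by case: (ord (F d m n)) => [r| |] //=; rewrite ?leey // -EFinD !lee_fin => ?; lra.
Qed.

Section NormalizedAtP.
Variable p : nat.
Hypothesis ord_p : ord p%:R = 1%:E.

Lemma ord_pX n : ord (p%:R ^+ n) = n%:R%:E.
Proof.
elim: n => [|n IH]; first by rewrite expr0 ord1.
by rewrite exprS ordM IH ord_p -EFinD -natr1 addrC.
Qed.

Lemma pX_neq0 n : p%:R ^+ n != 0 :> L.
Proof. by apply/eqP => pn0; have := ord_pX n; rewrite pn0 ord0. Qed.

Lemma ord_char0 : has_char0 L.
Proof.
move=> q; rewrite [RHS]inE; apply/negbTE/negP => char_q.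
have q0 := pcharf0 char_q.
have coprime_qp : coprime q p.
  rewrite prime_coprime ?(pcharf_prime char_q) //.
  apply: contra (pX_neq0 1) => /dvdnP[t ->].
  by rewrite expr1 natrM q0 mulr0.
have [a _ /dvdnP[b]] := Bezoutl p (prime_gt0 (pcharf_prime char_q)).
rewrite (eqP coprime_qp) => /(congr1 (fun n => n%:R : L)).
rewrite natrD !natrM q0 mulr0 => /eqP; rewrite addr_eq0 => /eqP one_eq.
have := congr1 ord one_eq; rewrite ord1 ordN ordM ord_p.
have := ord_nat_ge0 a; case: (ord a%:R) => [r| |] //.
by rewrite lee_fin => r_ge0 [] /=; lra.
Qed.

Lemma intr_inj_ord : injective (fun z : int => z%:~R : L).
Proof.
have natr_eq0 := (pcharf0P L).1 ord_char0.
have intr_eq0 (t : int) : (t%:~R == 0 :> L) = (t == 0).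
  by case: t => n; rewrite ?NegzE ?intrN ?oppr_eq0 natr_eq0.
by move=> z w /= /eqP; rewrite -subr_eq0 -intrB intr_eq0 subr_eq0 => /eqP.
Qed.

Lemma y_of_inj k (e0 : L) : e0 != 0 -> injective (y_of k e0).
Proof.
move=> e0_neq0 kappa kappa' /(congr1 (fun x => x * e0)).
by rewrite /y_of !divfK // => /intr_inj_ord; exact: addIr.
Qed.

Lemma pX_scale_Lambda (C : R) (f : nat -> L) : (forall m, (C%:E <= ord (f m))%E) ->
  exists M, forall M', (M <= M')%N -> in_Lambda ord (fun m => p%:R ^+ M' * f m).
Proof.
move=> f_lb; have [M ltM] := exists_nat_gt (- C); exists M => M' le_M m.
rewrite ordM ord_pX; apply: le_trans (leeD (lexx _) (f_lb m)).
have : (M%:R <= M'%:R :> R) by rewrite ler_nat.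
by rewrite -EFinD lee_fin => ?; lra.
Qed.

Lemma mulY_coef_vanish (D : finType) h (F G : tens_elt L D) Q y d n :
  in_tens ord p h F -> in_tens ord p h G -> ker_gen y Q -> F = mulY Q G ->
  evals_to ord (fun m => F d m n) y 0.
Proof.
move=> F_tens G_tens [_ Q_ker] FG.
have [CF /pX_scale_Lambda[MF F_Lambda]] := in_tens_coef_lb d n F_tens.
have [CG /pX_scale_Lambda[MG G_Lambda]] := in_tens_coef_lb d n G_tens.
pose u : L := p%:R ^+ maxn MF MG.
have -> : (fun m => F d m n) = (fun m => u^-1 * (u * F d m n)).
  by apply/funext => m; rewrite mulKf ?pX_neq0.
apply/evals_to_scale/(Q_ker _ (F_Lambda _ (leq_maxl _ _))).
exists (fun m => u * G d m n); first exact: G_Lambda (leq_maxr _ _).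
apply/funext => m; rewrite FG /mulY /mul_ser mulr_sumr.
by apply: eq_bigr => i _; rewrite mulrCA.
Qed.

End NormalizedAtP.

End Valuation.

Theorem lemma4p2 (R : realType) (L : fieldType) (ord : L -> \bar R)
  (p k : nat) (e0 : L) (h : R) (Delta : finType)
  (B : set int) (P : int -> nat -> L) :
  prime p -> (5 <= p)%N ->
  finite_ext_Qp ord p ->
  (2 <= k)%N -> ~~ odd k ->
  e0 != 0 ->
  (ord e0 < ((p%:R - 1) / (p%:R - 2) : R)%:E)%E ->
  0 <= h ->
  ~ finite_set B ->
  (forall kappa, B kappa -> (ord e0 < ord ((kappa - k%:Z)%:~R))%E) ->
  (forall kappa, B kappa -> gen_ker_pi ord k e0 kappa (P kappa)) ->
  forall F : tens_elt L Delta,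
    in_tens ord p h F ->
    (forall kappa, B kappa ->
       exists2 G : tens_elt L Delta, in_tens ord p h G & F = mulY (P kappa) G) ->
    F = (fun _ _ _ => 0).
Proof.
move=> _ _ [[ord_infty ordM ord_add ord_p] [[e [e_gt0 ord_disc]] _ _]] _ _ e0_neq0 _ _
  B_inf ord_e0_lt P_ker F F_tens F_div.
have Y_gt0 kappa : B kappa -> (0 < ord (y_of k e0 kappa))%E.
  by move=> Bk; apply: (y_of_gt0 ord_infty ordM e0_neq0); exact: ord_e0_lt.
have Y_inj kappa kappa' :
    B kappa -> B kappa' -> y_of k e0 kappa = y_of k e0 kappa' -> kappa = kappa'.
  by move=> _ _; apply: (y_of_inj ord_infty ordM ord_add ord_p e0_neq0).
apply/funext => d; apply/funext => m; apply/funext => n.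
have [C /(pX_scale_Lambda ord_infty ordM ord_p)[M scaled_Lambda]] :=
  in_tens_coef_lb d n F_tens.
have scaled_vanish kappa :
    B kappa -> evals_to ord (fun m => p%:R ^+ M * F d m n) (y_of k e0 kappa) 0.
  move=> Bk; have [G G_tens FG] := F_div kappa Bk.
  apply: (evals_to_scale ord_infty ordM).
  exact: (mulY_coef_vanish ord_infty ordM ord_p d n F_tens G_tens (P_ker kappa Bk) FG).
have := Lambda_vanish_eq0 ord_infty ordM ord_add e_gt0 ord_disc Y_gt0 Y_inj P_ker
  (scaled_Lambda M (leqnn M)) B_inf scaled_vanish m.
by move/eqP; rewrite mulf_eq0 (negbTE (pX_neq0 ord_infty ordM ord_p M)) => /eqP.
Qed.
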